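(* Let $k\ge3$ and let $\{H_{r_1},\dots,H_{r_k}\}$ be a set of pairwise parallel hyperplanes in $\mathbb{H}^n$ (pairwise distinct and disjoint in $\mathbb{H}^n$). Suppose all $H_{r_i}$ have a common ideal point $\xi\in\partial\mathbb{H}^n$, and that the group $D\subseteq\mathrm{Iso}(\mathbb{H}^n)$ generated by the reflections $r_i$ across $H_{r_i}$ is a discrete subgroup. Then $D$ is isomorphic to the infinite dihedral group $D_\infty$.
   Context: $\partial\mathbb{H}^n$ is the visual boundary of hyperbolic $n$-space; an ideal point of a hyperplane is an endpoint of a geodesic ray contained in it. *)

From mathcomp Require Import all_boot all_order all_algebra.
From mathcomp Require Import all_classical all_reals all_analysis.
Set Implicit Arguments. Unset Strict Implicit. Unset Printing Implicit Defensive.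
Import Order.TTheory GRing.Theory Num.Theory.
Local Open Scope ring_scope.

(* Hyperboloid model of H^n inside R^{n+1} = 'cV_(n.+1), coordinate 0 = time. *)
Section Hyp.
Variables (R : realType) (n : nat).
Notation vec := 'cV[R]_(n.+1).
Notation mat := 'M[R]_(n.+1).

Definition eta (i : 'I_n.+1) : R := if val i == 0%N then -1 else 1.

Definition mink (x y : vec) : R := \sum_i eta i * x i 0 * y i 0.

Definition hpoint (x : vec) : Prop := mink x x = -1 /\ 0 < x ord0 0.

(* representatives of points of the visual boundary: future null vectors
   (a boundary point is the positive ray spanned by such a vector) *)
Definition ideal_vec (u : vec) : Prop := mink u u = 0 /\ 0 < u ord0 0.

Definition hyperplane (v : vec) : vec -> Prop := fun x => hpoint x /\ mink x v = 0.

Definition cosh_ (t : R) : R := (expR t + expR (- t)) / 2.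
Definition sinh_ (t : R) : R := (expR t - expR (- t)) / 2.

(* unit-speed geodesic ray from x with unit tangent w (mink x w = 0, mink w w = 1) *)
Definition geod_ray (x w : vec) (t : R) : vec := cosh_ t *: x + sinh_ t *: w.

(* u represents an ideal point of the set H: it is the endpoint (the null ray
   spanned by x + w) of a geodesic ray contained in H *)
Definition ideal_point_of (H : vec -> Prop) (u : vec) : Prop :=
  exists x w : vec, [/\ hpoint x, mink x w = 0, mink w w = 1,
    (forall t, 0 <= t -> H (geod_ray x w t)) &
    exists2 c : R, 0 < c & u = c *: (x + w)].

(* the reflection across hyperplane v^perp: x |-> x - 2 <x,v>/<v,v> v *)
Definition reflmx (v : vec) : mat :=
  \matrix_(i, j) ((i == j)%:R - 2 * v i 0 * (eta j * v j 0) / mink v v).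

Definition gen_group (S : mat -> Prop) : mat -> Prop := fun M =>
  exists s : seq mat,
    (forall A, A \in s -> exists2 B, S B & (A = B \/ A = invmx B)) /\
    M = foldr mulmx 1%:M s.

Definition discrete_set (D : mat -> Prop) : Prop :=
  forall g, D g -> exists2 e : R, 0 < e &
    forall h, D h -> (forall i j, `|h i j - g i j| < e) -> h = g.
End Hyp.

(* The infinite dihedral group, as the group of maps of Z:  x |-> (-1)^s x + m *)
Definition Dinf := (bool * int)%type.
Definition dinf_mul (a b : Dinf) : Dinf :=
  (addb a.1 b.1, a.2 + (if a.1 then - b.2 else b.2))%R.

Definition iso_Dinf (R : realType) (n : nat) (D : 'M[R]_(n.+1) -> Prop) : Prop :=
  exists phi : Dinf -> 'M[R]_(n.+1),
    [/\ injective phi, (forall a, D (phi a)), (forall M, D M -> exists a, phi a = M) &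
        forall a b, phi (dinf_mul a b) = phi a *m phi b].

From mathcomp Require Import all_boot all_order all_algebra.
From mathcomp Require Import all_classical all_reals all_analysis.
From mathcomp Require Import ring lra.
Import Order.TTheory GRing.Theory Num.Theory.
Set Implicit Arguments. Unset Strict Implicit.
Local Open Scope ring_scope.

(* Every normal v_i is Minkowski-orthogonal to the null vector u representing
   xi.  For two normals whose hyperplanes are disjoint the Gram determinant
   vanishes (otherwise the hyperplanes would meet in H^n), which forces
   v_j to be a multiple of v_0 + b_j u: every generator is the reflection r_b
   in (v_0 + b u)^perp.  The products T(2b) = r_b r_0 are parabolic
   translations fixing xi, with T(s) T(t) = T(s + t) and r_0 T(t) r_0 = T(-t).
   Hence D = {T(s) r_0^e | s in L} for an additive subgroup L of R, which is
   discrete because D is, and nonzero because two of the hyperplanes differ.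
   So L = dZ, and (e, m) |-> T(m d) r_0^e is an isomorphism from D_infinity
   onto D. *)

Section Minkowski.
Variables (R : realType) (n : nat).
Notation vec := 'cV[R]_(n.+1).
Implicit Types x y z u v w : vec.

Lemma minkC x y : mink x y = mink y x.
Proof. by apply: eq_bigr => i _; rewrite -!mulrA [x i 0 * _]mulrC. Qed.

Lemma minkDl x y z : mink (x + y) z = mink x z + mink y z.
Proof. by rewrite /mink -big_split; apply: eq_bigr => i _; rewrite !mxE mulrDr mulrDl. Qed.

Lemma minkZl a x z : mink (a *: x) z = a * mink x z.
Proof. by rewrite /mink mulr_sumr; apply: eq_bigr => i _; rewrite !mxE; ring. Qed.

Lemma minkNl x z : mink (- x) z = - mink x z.
Proof. by rewrite -scaleN1r minkZl mulN1r. Qed.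

Lemma minkDr x y z : mink z (x + y) = mink z x + mink z y.
Proof. by rewrite !(minkC z) minkDl. Qed.

Lemma minkZr a x z : mink z (a *: x) = a * mink z x.
Proof. by rewrite !(minkC z) minkZl. Qed.

Lemma minkNr x z : mink z (- x) = - mink z x.
Proof. by rewrite !(minkC z) minkNl. Qed.

Definition minkE := (minkDl, minkDr, minkZl, minkZr, minkNl, minkNr).

Lemma eta0 : eta R (@ord0 n) = -1.
Proof. by rewrite /eta eqxx. Qed.

Lemma eta_neq0 (i : 'I_n.+1) : i != ord0 -> eta R i = 1.
Proof. by rewrite /eta -val_eqE => /negbTE ->. Qed.

Lemma mink_delta0 w : mink (delta_mx ord0 0) w = - w ord0 0.
Proof.
rewrite /mink (bigD1 ord0) //= big1 ?addr0 => [|i /negbTE i0].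
  by rewrite !mxE eqxx eta0 mulr1 mulN1r.
by rewrite !mxE i0 mulr0 mul0r.
Qed.

Lemma minkxxE x : mink x x = - x ord0 0 ^+ 2 + \sum_(i | i != ord0) x i 0 ^+ 2.
Proof.
rewrite /mink (bigD1 ord0) //= eta0; congr (_ + _); first by rewrite mulN1r mulNr.
by apply: eq_bigr => i /eta_neq0 ->; rewrite mul1r expr2.
Qed.

Lemma mink_ge0_time0 x : x ord0 0 = 0 -> 0 <= mink x x.
Proof.
by move=> x0; rewrite minkxxE x0 expr0n oppr0 add0r sumr_ge0 // => i _; rewrite sqr_ge0.
Qed.

Lemma mink_eq0_time0 x : x ord0 0 = 0 -> mink x x = 0 -> x = 0.
Proof.
rewrite minkxxE => x0; rewrite x0 expr0n oppr0 add0r => /psumr_eq0P x_eq0.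
apply/matrixP => i j; rewrite ord1 mxE; have [->|i0] := eqVneq i ord0 => //.
by apply/eqP; rewrite -sqrf_eq0 x_eq0 // => l _; rewrite sqr_ge0.
Qed.

Lemma timelike_time_neq0 x : mink x x < 0 -> x ord0 0 != 0.
Proof. by apply: contraTneq => /mink_ge0_time0; rewrite leNgt => /negbTE ->. Qed.

Lemma orth_null_isotropic u y : mink u u = 0 -> u ord0 0 != 0 ->
  mink y u = 0 -> mink y y = 0 -> y = (y ord0 0 / u ord0 0) *: u.
Proof.
move=> uu u0 yu yy; set c := y ord0 0 / u ord0 0.
have z0 : (y - c *: u) ord0 0 = 0 by rewrite !mxE /c; field.
apply/eqP; rewrite -subr_eq0; apply/eqP/mink_eq0_time0 => //.
by rewrite !minkE uu yu (minkC u y) yu yy; ring.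
Qed.
End Minkowski.

Section Hyperplanes.
Variables (R : realType) (n : nat).
Notation vec := 'cV[R]_(n.+1).
Implicit Types x y z u v w a b : vec.

Lemma ideal_point_orth v u : ideal_point_of (hyperplane v) u -> mink v u = 0.
Proof.
move=> [x [w [_ _ _ ray [c _ ->]]]].
have [_ xv] := ray 0 (lexx 0); have [_ wv] := ray 1 ler01.
rewrite /geod_ray /cosh_ /sinh_ !minkE oppr0 expR0 in xv wv.
have {}xv : mink x v = 0 by lra.
have sinh1 : (expR 1 - expR (-1)) / 2 != 0 :> R.
  by rewrite mulf_neq0 ?invr_eq0 ?pnatr_eq0 // subr_eq0 gt_eqF // ltr_expR; lra.
have {}wv : mink w v = 0 by apply: (mulfI sinh1); rewrite mulr0 -wv xv mulr0 add0r.
by rewrite minkZr minkDr (minkC v x) (minkC v w) xv wv addr0 mulr0.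
Qed.

Lemma hyperplaneZ c v : c != 0 -> hyperplane (c *: v) = hyperplane v.
Proof.
move=> c0; apply: funext => x; apply: propext; rewrite /hyperplane minkZr.
split=> -[xH xv]; split=> //; last by rewrite xv mulr0.
by move/eqP: xv; rewrite mulf_eq0 (negbTE c0) => /eqP.
Qed.

Lemma hyperplanes_meet u a b : mink u u = 0 -> 0 < u ord0 0 ->
  mink a u = 0 -> mink b u = 0 -> mink a a * mink b b - mink a b ^+ 2 != 0 ->
  exists x, hyperplane a x /\ hyperplane b x.
Proof.
move=> uu u_gt0 au bu gram.
set e0 : vec := delta_mx ord0 0; set p := mink e0 a; set q := mink e0 b.
(* Cramer's rule for the 2x2 system mink y a = mink y b = 0 *)
set y := e0 + ((q * mink a b - p * mink b b) / (mink a a * mink b b - mink a b ^+ 2)) *: a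
            + ((p * mink a b - q * mink a a) / (mink a a * mink b b - mink a b ^+ 2)) *: b.
have ya : mink y a = 0 by rewrite /y !minkE (minkC b a) -/p; field.
have yb : mink y b = 0 by rewrite /y !minkE -/q; field.
have yu : mink y u = - u ord0 0 by rewrite /y !minkE au bu mink_delta0; ring.
clearbody y.
(* move y along the null direction u until it lies on the hyperboloid *)
have u0 : u ord0 0 != 0 by rewrite gt_eqF.
set x := (mink y y + 1) / (2 * u ord0 0) *: u + y.
have xx : mink x x = -1 by rewrite /x !minkE uu yu (minkC u y) yu; field.
have xa : mink x a = 0 by rewrite /x !minkE (minkC u a) au ya; ring.
have xb : mink x b = 0 by rewrite /x !minkE (minkC u b) bu yb; ring.
have [x_gt0|x_le0] := ltrP 0 (x ord0 0); first by exists x.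
have x0 : x ord0 0 != 0 by apply: timelike_time_neq0; rewrite xx ltrN10.
exists (- x); rewrite /hyperplane /hpoint !(minkNl, minkNr) xx xa xb opprK oppr0 mxE.
by rewrite oppr_gt0 lt_neqAle x0 x_le0.
Qed.

Lemma degenerate_gram_pencil u v w : mink u u = 0 -> u ord0 0 != 0 ->
  mink v u = 0 -> mink w u = 0 -> 0 < mink v v -> 0 < mink w w ->
  mink v v * mink w w = mink v w ^+ 2 ->
  exists c t : R, c != 0 /\ w = c *: (v + t *: u).
Proof.
move=> uu u0 vu wu v_gt0 w_gt0 gram; set c := mink v w.
have c0 : c != 0.
  by apply/eqP => c0; move/eqP: gram; rewrite -/c c0 expr0n mulf_eq0 !gt_eqF.
set z := c *: v - mink v v *: w.
have zu : mink z u = 0 by rewrite /z !minkE vu wu; ring.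
have zz : mink z z = 0.
  have -> : mink z z = mink v v * (mink v v * mink w w - c ^+ 2).
    by rewrite /z !minkE (minkC w v) -/c; ring.
  by rewrite gram subrr mulr0.
have {}zu := orth_null_isotropic uu u0 zu zz; set K := _ / _ in zu.
have v0 : mink v v != 0 by rewrite gt_eqF.
exists (c / mink v v), (- K / c); split; first by rewrite mulf_neq0 ?invr_eq0.
have -> : w = (mink v v)^-1 *: (c *: v - z).
  by rewrite /z opprB addrC subrK scalerA mulVf ?scale1r.
by rewrite zu; apply/matrixP => i j; rewrite !mxE; field; rewrite c0 v0.
Qed.
End Hyperplanes.

Section Reflections.
Variables (R : realType) (n : nat).
Notation vec := 'cV[R]_(n.+1).
Notation mat := 'M[R]_(n.+1).
Implicit Types x v : vec.

Lemma mx_cVP (A B : mat) : (forall x : vec, A *m x = B *m x) -> A = B.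
Proof.
move=> eqAB; apply/matrixP => i j.
by have /colP/(_ i) := eqAB (delta_mx j 0); rewrite -!colE !mxE.
Qed.

Lemma reflmxE v x : reflmx v *m x = x - (2 * mink v x / mink v v) *: v.
Proof.
apply/colP => i; rewrite !mxE.
under eq_bigr => l _ do rewrite !mxE mulrBl mulrDl.
rewrite sumrB (bigD1 i) //= eqxx mul1r big1 ?addr0 => [|l /negbTE]; last first.
  by rewrite eq_sym => ->; rewrite !mul0r.
rewrite mul1r -[mink v x]/(\sum_l eta R l * v l 0 * x l 0) mulr_sumr mulr_suml mulr_suml.
by congr (_ - _); apply: eq_bigr => l _; ring.
Qed.

Lemma reflmxZ c v : c != 0 -> mink v v != 0 -> reflmx (c *: v) = reflmx v.
Proof.
move=> c0 v0; apply: mx_cVP => x; rewrite !reflmxE !minkE.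
by apply/colP => i; rewrite !mxE; field; rewrite c0 v0.
Qed.

Lemma reflmxK v : mink v v != 0 -> reflmx v *m reflmx v = 1%:M.
Proof.
move=> v0; apply: mx_cVP => x; rewrite mul1mx -mulmxA !reflmxE !minkE.
by apply/colP => i; rewrite !mxE; field.
Qed.
End Reflections.

Lemma invmx_invol (R : comUnitRingType) n (A : 'M[R]_n.+1) :
  A *m A = 1%:M -> invmx A = A.
Proof.
move=> AA; have [uA _] := mulmx1_unit AA.
by rewrite -[invmx A]mulmx1 -AA mulmxA mulVmx // mul1mx.
Qed.

Section GeneratedGroup.
Variables (R : realType) (n : nat) (S : 'M[R]_(n.+1) -> Prop).

Lemma gen_group1 : gen_group S 1%:M.
Proof. by exists [::]. Qed.

Lemma gen_groupM A B : gen_group S A -> gen_group S B -> gen_group S (A *m B).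
Proof.
move=> [s [sS ->]] [t [tS ->]]; exists (s ++ t); split.
  by move=> C; rewrite mem_cat => /orP[/sS | /tS].
by elim: s {sS} => [|C s IHs] /=; rewrite ?mul1mx // -IHs mulmxA.
Qed.

Lemma gen_group_gen A : S A -> gen_group S A.
Proof.
move=> SA; exists [:: A]; split; last by rewrite /= mulmx1.
by move=> C; rewrite inE => /eqP ->; exists A; first exact: SA; left.
Qed.

Lemma gen_group_ind (P : 'M[R]_(n.+1) -> Prop) : P 1%:M ->
  (forall A B M, S B -> A = B \/ A = invmx B -> P M -> P (A *m M)) ->
  forall M, gen_group S M -> P M.
Proof.
move=> P1 PM M [s [sS ->]]; elim: s sS => [|A s IHs] sS //=.
have [B SB AB] := sS A (mem_head A s).
by apply: PM SB AB (IHs _) => C Cs; apply: sS; rewrite inE Cs orbT.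
Qed.
End GeneratedGroup.

Lemma small_quadratic (R : realFieldType) (K e s a b : R) : 0 < K ->
  `|a| + `|b| <= K -> `|s| < Num.min 1 (e / K) -> `|s * a + s ^+ 2 * b| < e.
Proof.
move=> K_gt0 abK; rewrite lt_min => /andP[s1 sK].
rewrite ltr_pdivlMr // in sK.
apply: le_lt_trans (ler_normD _ _) _; rewrite !normrM.
have xyzK : `|s| * (`|a| + `|b|) <= `|s| * K by rewrite ler_wpM2l.
have xxz : `|s| * `|s| * `|b| <= `|s| * `|b|.
  by rewrite -mulrA ler_wpM2l // ler_piMl // ltW.
lra.
Qed.

Section Parabolic.
Variables (R : realType) (n : nat) (u v : 'cV[R]_(n.+1)).
Notation vec := 'cV[R]_(n.+1).
Notation mat := 'M[R]_(n.+1).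
Hypotheses (uu : mink u u = 0) (uv : mink u v = 0) (v0 : mink v v != 0).
Hypothesis u0 : u ord0 0 != 0.

Let vu : mink v u = 0. Proof. by rewrite minkC. Qed.

Definition pencil_refl (b : R) : mat := reflmx (v + b *: u).

Definition parabolic (s : R) : mat := locked (pencil_refl (s / 2) *m pencil_refl 0).

Lemma parabolic_pencil s : parabolic s = pencil_refl (s / 2) *m pencil_refl 0.
Proof. by rewrite /parabolic -lock. Qed.

Lemma pencil_reflE b x : pencil_refl b *m x =
  x - (2 * (mink v x + b * mink u x) / mink v v) *: (v + b *: u).
Proof.
rewrite /pencil_refl reflmxE !minkE uu vu uv.
by congr (_ - _ *: _); field.
Qed.

Lemma parabolicE s x : parabolic s *m x =
  x - (s / mink v v * mink u x) *: v
    + (s / mink v v * mink v x - s ^+ 2 / (2 * mink v v) * mink u x) *: u.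
Proof.
rewrite parabolic_pencil -mulmxA !pencil_reflE !minkE uu vu uv.
by apply/colP => i; rewrite !mxE; field.
Qed.

Lemma parabolicD s t : parabolic s *m parabolic t = parabolic (s + t).
Proof.
apply: mx_cVP => x; rewrite -mulmxA !parabolicE !minkE uu vu uv.
by apply/colP => i; rewrite !mxE; field.
Qed.

Lemma parabolic0 : parabolic 0 = 1%:M.
Proof.
apply: mx_cVP => x; rewrite parabolicE mul1mx.
by apply/colP => i; rewrite !mxE; field.
Qed.

Lemma pencil_reflK b : pencil_refl b *m pencil_refl b = 1%:M.
Proof. by rewrite reflmxK // !minkE uu uv vu !mulr0 !addr0. Qed.

Lemma pencil_refl0_parabolic t :
  pencil_refl 0 *m parabolic t = parabolic (- t) *m pencil_refl 0.
Proof.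
apply: mx_cVP => x; rewrite -!mulmxA ?(parabolicE, pencil_reflE) !minkE uu vu uv.
by apply/colP => i; rewrite !mxE; field.
Qed.

Lemma pencil_refl_parabolic b : pencil_refl b = parabolic (2 * b) *m pencil_refl 0.
Proof.
by rewrite parabolic_pencil -mulmxA pencil_reflK mulmx1 [2 * b]mulrC mulfK ?pnatr_eq0.
Qed.

Lemma parabolic_v s : parabolic s *m v = v + s *: u.
Proof. by rewrite parabolicE uv; apply/colP => i; rewrite !mxE; field. Qed.

Lemma pencil_refl0_v : pencil_refl 0 *m v = - v.
Proof. by rewrite pencil_reflE uv; apply/colP => i; rewrite !mxE; field. Qed.

Lemma parabolic_eq1 s : parabolic s = 1%:M -> s = 0.
Proof.
move=> T1; have /colP/(_ ord0) := parabolic_v s; rewrite T1 mul1mx !mxE.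
by move/eqP; rewrite addrC -subr_eq subrr eq_sym mulf_eq0 (negbTE u0) orbF => /eqP.
Qed.

Lemma parabolic_near1 e : 0 < e -> exists2 d : R, 0 < d &
  forall s, `|s| < d -> forall i j, `|parabolic s i j - (1%:M : mat) i j| < e.
Proof.
move=> e_gt0.
pose A i j := - (mink u (delta_mx j 0) / mink v v) * v i 0
              + mink v (delta_mx j 0) / mink v v * u i 0.
pose B i j := - (mink u (delta_mx j 0) / (2 * mink v v)) * u i 0.
have TAB s i j : parabolic s i j - (1%:M : mat) i j = s * A i j + s ^+ 2 * B i j.
  have /colP/(_ i) := parabolicE s (delta_mx j 0).
  by rewrite -colE !mxE => ->; rewrite eqxx andbT /A /B; field.
pose K := \big[Num.max/1]_(ij : 'I_n.+1 * 'I_n.+1) (`|A ij.1 ij.2| + `|B ij.1 ij.2|).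
have ABK i j : `|A i j| + `|B i j| <= K.
  exact: (le_bigmax 1 (fun ij => `|A ij.1 ij.2| + `|B ij.1 ij.2|) (i, j)).
have K_gt0 : 0 < K by apply: lt_le_trans ltr01 (bigmax_ge_id _ _ _ _).
exists (Num.min 1 (e / K)); first by rewrite lt_min ltr01 divr_gt0.
by move=> s sK i j; rewrite TAB; apply: small_quadratic sK.
Qed.
End Parabolic.

Lemma disjoint_hyperplanes_pencil (R : realType) n (u v w : 'cV[R]_n.+1) :
  mink u u = 0 -> 0 < u ord0 0 -> mink v u = 0 -> mink w u = 0 ->
  0 < mink v v -> 0 < mink w w -> (forall x, ~ (hyperplane v x /\ hyperplane w x)) ->
  exists b, reflmx w = pencil_refl u v b /\ (b = 0 -> hyperplane w = hyperplane v).
Proof.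
move=> uu u_gt0 vu wu v_gt0 w_gt0 disj.
have gram : mink v v * mink w w = mink v w ^+ 2.
  apply/eqP; rewrite -subr_eq0; apply: contraT => /(hyperplanes_meet uu u_gt0 vu wu).
  by case=> x /disj.
have [c [t [c0 ->]]] := degenerate_gram_pencil uu (lt0r_neq0 u_gt0) vu wu v_gt0 w_gt0 gram.
have vt0 : mink (v + t *: u) (v + t *: u) != 0.
  by rewrite !minkE uu vu (minkC u v) vu !mulr0 !addr0 lt0r_neq0.
exists t; split; first by rewrite reflmxZ.
by move=> t0; rewrite t0 scale0r addr0 hyperplaneZ.
Qed.

Section DiscreteSubgroup.
Variables (R : realType) (L : R -> Prop).
Hypotheses (L0 : L 0) (LB : forall s t, L s -> L t -> L (s - t)).

Lemma subgroup_intrM d : L d -> forall m : int, L (m%:~R * d).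
Proof.
move=> Ld; have LN s : L s -> L (- s) by move=> Ls; rewrite -sub0r; apply: LB.
have LnM (k : nat) : L (k%:R * d).
  elim: k => [|k IHk]; first by rewrite mul0r.
  by have := LB IHk (LN _ Ld); rewrite opprK -{2}[d]mul1r -mulrDl -mulrSr.
by case=> k; rewrite ?NegzE ?mulrNz ?mulNr; [apply: LnM | apply/LN/LnM].
Qed.

Lemma discrete_subgroup_cyclic b : L b -> b != 0 ->
  (exists2 e : R, 0 < e & forall s, L s -> `|s| < e -> s = 0) ->
  exists2 d : R, 0 < d & L d /\ forall s, L s -> exists m : int, s = m%:~R * d.
Proof.
move=> Lb b0 [e e_gt0 Le].
pose S := [set s | L s /\ 0 < s]%classic.
have S0 : (S !=set0)%classic.
  exists `|b|; split; last by rewrite normr_gt0.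
  by have [_|_] := ler0P b => //; rewrite -sub0r; apply: LB.
have Sinf : has_inf S by split=> //; exists 0 => s [_ /ltW].
have infS s : S s -> inf S <= s by apply: ge_inf; exists 0 => t [_ /ltW].
(* two elements of S within e of its infimum must coincide *)
have [Ld d_gt0] : S (inf S).
  have [s Ss sd] := inf_adherent e_gt0 Sinf.
  have [ds|sd'] := ltrP (inf S) s; last first.
    by have -> : inf S = s by apply/eqP; rewrite eq_le sd' infS.
  have [t St ts] := inf_lt S0 ds; have dt := infS t St.
  have /eqP : s - t = 0.
    by apply: Le (LB Ss.1 St.1) _; rewrite ger0_norm ?subr_ge0 ?ltW //; lra.
  by rewrite subr_eq0 => /eqP st; move: ts; rewrite st ltxx.
exists (inf S) => //; split=> // s Ls.
set d := inf S in Ld d_gt0 infS *; set m := Num.floor (s / d).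
have /andP[ms sm] := floor_itv (s / d); rewrite -/m in ms sm.
have r_ge0 : 0 <= s - m%:~R * d by rewrite subr_ge0 -ler_pdivlMr.
have r_ltd : s - m%:~R * d < d.
  by move: sm; rewrite intrD ltr_pdivrMr // mulrDl mul1r; lra.
exists m; apply/eqP; rewrite -subr_eq0 eq_le r_ge0 andbT leNgt.
apply/negP => r_gt0; have := infS _ (conj (LB Ls (subgroup_intrM Ld m)) r_gt0).
by rewrite leNgt r_ltd.
Qed.
End DiscreteSubgroup.

Section PencilGroup.
Variables (R : realType) (n : nat) (u v : 'cV[R]_(n.+1)).
Notation mat := 'M[R]_(n.+1).
Hypotheses (uu : mink u u = 0) (uv : mink u v = 0) (v0 : mink v v != 0).
Hypothesis u0 : u ord0 0 != 0.

Notation refl := (pencil_refl u v).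
Notation T := (parabolic u v).

Definition dinf_pencil (d : R) (a : Dinf) : mat :=
  T (a.2%:~R * d) *m (if a.1 then refl 0 else 1%:M).

Lemma dinf_pencilM d a b :
  dinf_pencil d (dinf_mul a b) = dinf_pencil d a *m dinf_pencil d b.
Proof.
case: a b => [[] m] [e l]; rewrite /dinf_pencil /dinf_mul /= intrD mulrDl -parabolicD //.
  rewrite intrN mulNr !mulmxA -(mulmxA _ (refl 0)) pencil_refl0_parabolic // mulmxA.
  by rewrite -!mulmxA; case: e; rewrite ?pencil_reflK ?mulmx1.
by rewrite mulmx1 mulmxA.
Qed.

Lemma dinf_pencil_v d a :
  dinf_pencil d a *m v = (if a.1 then -1 else 1) *: (v + (a.2%:~R * d) *: u).
Proof.
case: a => -[] m; rewrite -mulmxA ?mul1mx ?pencil_refl0_v // ?mulmxN parabolic_v //=.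
  by rewrite scaleN1r.
by rewrite scale1r.
Qed.

Lemma dinf_pencil_inj d : d != 0 -> injective (dinf_pencil d).
Proof.
move=> d0 [e m] [f l] /(congr1 (mulmx^~ v)); rewrite !dinf_pencil_v /= => eq_v.
have vu : mink v u = 0 by rewrite minkC.
have ef : e = f.
  have := congr1 (mink v) eq_v; rewrite !minkE vu !mulr0 !addr0 => /(mulIf v0).
  by case: e f {eq_v} => -[] // sign; exfalso; move: sign; lra.
have sign0 (g : bool) : (if g then -1 else 1 : R) != 0.
  by case: g; rewrite ?oppr_eq0 oner_eq0.
subst f; move/(scalerI (sign0 e))/addrI/colP/(_ ord0): eq_v.
rewrite !mxE => /(mulIf u0) /(mulIf d0).
by move/intr_inj ->.
Qed.

Section Generators.
Variable S : mat -> Prop.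
Hypothesis S_pencil : forall M, S M -> exists b, M = refl b.
Hypothesis S_refl0 : S (refl 0).

Let transl s := gen_group S (T s).

Lemma transl0 : transl 0.
Proof. by rewrite /transl parabolic0 //; apply: gen_group1. Qed.

Lemma translB s t : transl s -> transl t -> transl (s - t).
Proof.
move=> Ts Tt; rewrite /transl -parabolicD //.
have <- : refl 0 *m T t *m refl 0 = T (- t).
  by rewrite pencil_refl0_parabolic // -mulmxA pencil_reflK // mulmx1.
by apply: gen_groupM Ts (gen_groupM (gen_groupM _ Tt) _); apply: gen_group_gen.
Qed.

Lemma transl_gen b : S (refl b) -> transl (2 * b).
Proof.
move=> Sb; rewrite /transl -[T _]mulmx1 -(pencil_reflK uu uv v0 0) mulmxA.
by rewrite -pencil_refl_parabolic //; apply: gen_groupM; apply: gen_group_gen.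
Qed.

Lemma gen_group_pencilE M : gen_group S M ->
  exists s (e : bool), transl s /\ M = T s *m (if e then refl 0 else 1%:M).
Proof.
elim/gen_group_ind => [|A B _ SB AB [t [e [Tt ->]]]].
  by exists 0, false; rewrite parabolic0 ?mulmx1 //; split=> //; apply: transl0.
have [b Bb] := S_pencil SB; subst B.
have -> : A = refl b by case: AB => // ->; rewrite invmx_invol ?pencil_reflK.
exists (2 * b - t), (~~ e); split; first by apply: translB => //; apply: transl_gen.
rewrite pencil_refl_parabolic // mulmxA -(mulmxA _ (refl 0)) pencil_refl0_parabolic //.
by rewrite mulmxA parabolicD // -mulmxA; case: e; rewrite ?pencil_reflK ?mulmx1.
Qed.

Lemma transl_discrete : discrete_set (gen_group S) ->
  exists2 e : R, 0 < e & forall s, transl s -> `|s| < e -> s = 0.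
Proof.
move=> discD; have [e e_gt0 near1] := discD _ (gen_group1 S).
have [d d_gt0 Tnear1] := parabolic_near1 uu uv v0 e_gt0.
exists d => // s Ts sd; apply: (parabolic_eq1 uu uv v0 u0).
by apply: near1 => //; apply: Tnear1.
Qed.

Lemma pencil_group_iso_Dinf : discrete_set (gen_group S) ->
  (exists2 b, b != 0 & S (refl b)) -> iso_Dinf (gen_group S).
Proof.
move=> discD [b b0 Sb]; have b2 : 2 * b != 0 by rewrite mulf_neq0 ?pnatr_eq0.
have [d d_gt0 [Td transl_dZ]] :=
  discrete_subgroup_cyclic transl0 translB (transl_gen Sb) b2 (transl_discrete discD).
exists (dinf_pencil d); split.
- exact/dinf_pencil_inj/lt0r_neq0.
- case=> e m; apply: gen_groupM; first exact: (subgroup_intrM transl0 translB Td m).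
  by case: e; [apply: gen_group_gen | apply: gen_group1].
- move=> M /gen_group_pencilE [s [e [Ts ->]]]; have [m ->] := transl_dZ s Ts.
  by exists (e, m).
- exact: dinf_pencilM.
Qed.
End Generators.
End PencilGroup.

Unset Implicit Arguments.

Theorem mainTheorem7 (R : realType) (n k : nat) (v : 'I_k -> 'cV[R]_(n.+1)) :
  (3 <= k)%N ->
  (forall i, 0 < mink (v i) (v i)) ->
  (forall i j, i != j -> hyperplane (v i) <> hyperplane (v j)) ->
  (forall i j, i != j -> forall x, ~ (hyperplane (v i) x /\ hyperplane (v j) x)) ->
  (exists xi, ideal_vec xi /\ forall i, ideal_point_of (hyperplane (v i)) xi) ->
  discrete_set (gen_group (fun M => exists i, M = reflmx (v i))) ->
  iso_Dinf (gen_group (fun M => exists i, M = reflmx (v i))).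
Proof.
move=> k3 v_gt0 v_neq v_disj [u [[uu u_gt0] u_ideal]] discD.
have vu i : mink (v i) u = 0 by apply: ideal_point_orth.
pose i0 : 'I_k := Ordinal (ltnW (ltnW k3)); pose i1 : 'I_k := Ordinal (ltnW k3).
have reflE j : exists b, reflmx (v j) = pencil_refl u (v i0) b /\
                         (b = 0 -> hyperplane (v j) = hyperplane (v i0)).
  have [->|ji0] := eqVneq j i0; first by exists 0; rewrite /pencil_refl scale0r addr0.
  apply: disjoint_hyperplanes_pencil => // x [xi0 xj].
  exact: v_disj ji0 x (conj xj xi0).
have uv0 : mink u (v i0) = 0 by rewrite minkC.
apply: (pencil_group_iso_Dinf uu uv0 (lt0r_neq0 (v_gt0 i0)) (lt0r_neq0 u_gt0)) => //.
- by move=> M [j ->]; have [b [-> _]] := reflE j; exists b.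
- by exists i0; rewrite /pencil_refl scale0r addr0.
have [b [Eb b_eq0]] := reflE i1; exists b; last by exists i1.
by apply/eqP => /b_eq0; apply: v_neq.
Qed.
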